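(* For $n\ge 3$, the family $\mathcal{F}=\{\emptyset\}\cup\{\{i\}:i\in[n]\}\cup\{\{i,j\}: i,j\in[n], i\ne j\}\cup\{\{1,2,\dots,i\}: 3\le i\le n\}$ is induced-$\bowtie$-saturated in $\mathcal{B}_n$; hence $\mathrm{isat}(n,\bowtie)\le\binom{n}{2}+2n-1$.
   Context: $\mathcal{B}_n$ denotes the Boolean lattice $(2^{[n]},\subseteq)$. A family $\mathcal{F}\subseteq 2^{[n]}$ (ordered by inclusion) is induced-$\mathcal{P}$-saturated if it contains no induced copy of $\mathcal{P}$ (an injection $f$ with $u\le v\iff f(u)\subseteq f(v)$) but every family $\mathcal{F}'$ with $\mathcal{F}\subsetneq\mathcal{F}'\subseteq 2^{[n]}$ contains one. $\mathrm{isat}(n,\mathcal{P})$ is the minimum size of such a family. The butterfly $\bowtie$ is the four-element poset on $\{A,B,C,D\}$ whose only strict relations are $A<B$, $A<D$, $C<B$, $C<D$. *)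

From mathcomp Require Import all_boot.
Set Implicit Arguments.
Unset Strict Implicit.
Unset Printing Implicit Defensive.

(* A finite poset P is given by a carrier finType and its (reflexive) order
   relation [le].  The Boolean lattice B_n is {set 'I_n}, where the element
   i : 'I_n stands for i+1 in [n] = {1,...,n}. *)

Definition has_induced_copy (P : finType) (le : rel P) (n : nat)
    (F : {set {set 'I_n}}) : bool :=
  [exists f : {ffun P -> {set 'I_n}},
    [&& injectiveb f, [forall u, f u \in F] &
        [forall u, forall v, le u v == (f u \subset f v)]]].

Definition induced_saturated (P : finType) (le : rel P) (n : nat)
    (F : {set {set 'I_n}}) : bool :=
  ~~ has_induced_copy le F &&
  [forall F' : {set {set 'I_n}}, (F \proper F') ==> has_induced_copy le F'].

(* isat(n, P): minimum size of an induced-P-saturated family in B_n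
   (defaults to 2^n + 1 if none exists; irrelevant once one exists). *)
Definition isat (P : finType) (le : rel P) (n : nat) : nat :=
  \big[minn/(2 ^ n).+1]_(F : {set {set 'I_n}} |
       induced_saturated le F) #|F|.

(* The butterfly on 'I_4 with A = 0, B = 1, C = 2, D = 3:
   strict relations A<B, A<D, C<B, C<D. *)
Definition butterfly_le : rel 'I_4 :=
  fun u v => (u == v) || ((val u \in [:: 0; 2]) && (val v \in [:: 1; 3])).

Definition prop23_family (n : nat) : {set {set 'I_n}} :=
  [set S : {set 'I_n} | (#|S| <= 2) ||
     [exists i : 'I_n.+1, (3 <= i) && (S == [set j : 'I_n | val j < i])]].

From mathcomp Require Import all_boot all_order zify.
Import Order.TTheory.

Set Implicit Arguments.
Unset Strict Implicit.
Unset Printing Implicit Defensive.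

(* The members of the family with more than two elements are initial segments,
   hence form a chain.  In an induced butterfly A, C < B, D the top B contains
   the incomparable A and C, so if #|B| <= 2 then B = A :|: C \subset D; thus
   both tops have at least three elements and are comparable, a contradiction.
   Conversely, let S be a new set, so #|S| >= 3 and S is not an initial
   segment.  With m = max S, a, c two other elements of S and x < m a gap of S,
   the sets {a}, {c} < S, {j | j < m} form an induced butterfly, the last
   set being a member of the family because it contains a, c and x. *)

Section ButterflySets.

Variable T : finType.
Implicit Types A B C D : {set T}.

Definition butterfly_sets A B C D : bool :=
  [&& A \subset B, C \subset B, A \subset D, C \subset D,
      ~~ (A \subset C), ~~ (C \subset A), ~~ (B \subset D) & ~~ (D \subset B)].

Lemma butterfly_sets_swap_tops A B C D :
  butterfly_sets A B C D -> butterfly_sets A D C B.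
Proof.
by case/and5P=> AB CB AD CD /and4P[AC CA BD DB]; apply/and5P; split=> //; apply/and4P.
Qed.

Lemma eq_setU_incomparable_card_le2 A B C :
  A \subset B -> C \subset B -> ~~ (A \subset C) -> ~~ (C \subset A) ->
  #|B| <= 2 -> B = A :|: C.
Proof.
move=> AB CB /subsetPn[a aA aC] /subsetPn[c cC cA] B2.
apply/eqP; rewrite eq_sym eqEcard subUset AB CB /=; apply: leq_trans B2 _.
have ac : a != c by apply: contraNneq aC => ->.
have <- : #|[set a; c]| = 2 by rewrite cards2 ac.
by apply: subset_leq_card; rewrite subUset !sub1set !inE aA cC orbT.
Qed.

Lemma butterfly_top_card_gt2 A B C D : butterfly_sets A B C D -> 2 < #|B|.
Proof.
case/and5P=> AB CB AD CD /and4P[AC CA BD _]; rewrite ltnNge.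
apply: contra BD => /(eq_setU_incomparable_card_le2 AB CB AC CA) ->.
by rewrite subUset AD CD.
Qed.

End ButterflySets.

Lemma induced_butterflyP n (F : {set {set 'I_n}}) :
  reflect (exists A B C D, [/\ A \in F, B \in F, C \in F, D \in F &
                               butterfly_sets A B C D])
          (has_induced_copy butterfly_le F).
Proof.
apply: (iffP existsP) => [[f /and3P[_ /forallP fF /forallP f_le]]|].
  have le_sub u v : butterfly_le u v = (f u \subset f v) by exact/eqP/(forallP (f_le u)).
  exists (f (@Ordinal 4 0 isT)), (f (@Ordinal 4 1 isT)),
         (f (@Ordinal 4 2 isT)), (f (@Ordinal 4 3 isT)).
  by split=> //; rewrite /butterfly_sets -!le_sub.
case=> [A [B [C [D [AF BF CF DF]]]]].
case/and5P=> AB CB AD CD /and4P[AC CA BD DB].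
have BA : ~~ (B \subset A) by apply: contra CA; apply: subset_trans CB.
have BC : ~~ (B \subset C) by apply: contra AC; apply: subset_trans AB.
have DA : ~~ (D \subset A) by apply: contra CA; apply: subset_trans CD.
have DC : ~~ (D \subset C) by apply: contra AC; apply: subset_trans AD.
pose f := [ffun u : 'I_4 => nth set0 [:: A; B; C; D] u].
have le_sub u v : butterfly_le u v = (f u \subset f v).
  case: u v => [[|[|[|[|u]]]] hu] [[|[|[|[|v]]]] hv] //; rewrite !ffunE /=;
  by rewrite ?subxx ?AB ?CB ?AD ?CD ?(negbTE AC) ?(negbTE CA) ?(negbTE BD)
             ?(negbTE DB) ?(negbTE BA) ?(negbTE BC) ?(negbTE DA) ?(negbTE DC).
exists f; apply/and3P; split.
- apply/injectiveP=> u v fuv.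
  have := le_sub u v; have := le_sub v u; rewrite fuv subxx {fuv}.
  by case: u v => [[|[|[|[|u]]]] hu] [[|[|[|[|v]]]] hv] //= _ _; apply: val_inj.
- by apply/forallP=> -[[|[|[|[|u]]]] hu] //; rewrite ffunE.
- by apply/forallP=> u; apply/forallP=> v; rewrite le_sub.
Qed.

Definition prefix_set n i : {set 'I_n} := [set j : 'I_n | j < i].

Lemma prefix_set_subset n i j : i <= j -> prefix_set n i \subset prefix_set n j.
Proof. by move=> ij; apply/subsetP=> x; rewrite !inE => xi; exact: leq_trans xi ij. Qed.

Lemma prefix_sets_total n i j :
  (prefix_set n i \subset prefix_set n j) || (prefix_set n j \subset prefix_set n i).
Proof.
case: (leqP i j) => [ij|/ltnW ji]; first by rewrite prefix_set_subset.
by apply/orP; right; apply: prefix_set_subset.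
Qed.

Lemma prefix_set_of_max n (S : {set 'I_n}) (m : 'I_n) :
  m \in S -> (forall j, j \in S -> j <= m) -> (forall j : 'I_n, j < m -> j \in S) ->
  S = prefix_set n m.+1.
Proof.
move=> mS S_le_m S_below; apply/setP=> j; rewrite inE ltnS.
apply/idP/idP=> [/S_le_m //|]; rewrite leq_eqVlt => /orP[/eqP/val_inj-> //|].
exact: S_below.
Qed.

Lemma prefix_set_mem_prop23_family n i :
  3 <= i <= n -> prefix_set n i \in prop23_family n.
Proof.
case/andP=> i3 i_n; rewrite inE; apply/orP; right; apply/existsP.
by exists (inord i); rewrite inordK ?ltnS // i3 eqxx.
Qed.

Lemma prop23_family_large_prefix n (S : {set 'I_n}) :
  S \in prop23_family n -> 2 < #|S| -> exists i, S = prefix_set n i.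
Proof.
rewrite inE ltnNge => /orP[-> //|/existsP[i /andP[_ /eqP->]]] _.
by exists i.
Qed.

Lemma prop23_family_butterfly_free n :
  ~~ has_induced_copy butterfly_le (prop23_family n).
Proof.
apply/induced_butterflyP=> -[A [B [C [D [_ BF _ DF bfly]]]]].
have [i Bi] := prop23_family_large_prefix BF (butterfly_top_card_gt2 bfly).
have [j Dj] := prop23_family_large_prefix DF
  (butterfly_top_card_gt2 (butterfly_sets_swap_tops bfly)).
case/and5P: bfly => _ _ _ _ /and4P[_ _ BD DB].
by move: (prefix_sets_total n i j); rewrite -Bi -Dj (negbTE BD) (negbTE DB).
Qed.

Lemma prop23_family_proper_has_butterfly n (F' : {set {set 'I_n}}) :
  prop23_family n \proper F' -> has_induced_copy butterfly_le F'.
Proof.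
case/properP=> sFF' [S SF' SnF].
have S_gt2 : 2 < #|S| by move: SnF; rewrite inE; case: leqP.
have [m0 m0S] : exists m0, m0 \in S by apply/set0Pn; rewrite -card_gt0 (leq_trans _ S_gt2).
case: (arg_maxnP (fun j : 'I_n => val j) m0S) => m mS S_le_m.
have {}mS : m \in S := mS.
have {}S_le_m : forall j, j \in S -> j <= m := S_le_m.
have : 1 < #|S :\ m| by move: S_gt2; rewrite (cardsD1 m) mS.
case/card_gt1P=> a [c [/setD1P[am aS] /setD1P[cm cS] ac]].
have a_lt_m : a < m by rewrite ltn_neqAle am S_le_m.
have c_lt_m : c < m by rewrite ltn_neqAle cm S_le_m.
have ac_nat : a != c :> nat by [].
have [x x_lt_m xS] : exists2 x : 'I_n, x < m & x \notin S.
  apply/exists_inP; apply: contraNT SnF => /exists_inPn S_below.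
  rewrite (prefix_set_of_max mS S_le_m) => [|j /S_below]; last by rewrite negbK.
  by apply: prefix_set_mem_prop23_family; rewrite ltn_ord andbT; lia.
have m_ge3 : 3 <= m.
  have xa : x != a :> nat by apply: contraNneq xS => /val_inj->.
  have xc : x != c :> nat by apply: contraNneq xS => /val_inj->.
  lia.
have singleton_F' (y : 'I_n) : [set y] \in F'.
  by apply: (subsetP sFF'); rewrite inE cards1.
apply/induced_butterflyP; exists [set a], S, [set c], (prefix_set n m).
split=> //.
  by apply: (subsetP sFF'); apply: prefix_set_mem_prop23_family; rewrite m_ge3 ltnW.
rewrite /butterfly_sets !sub1set aS cS !inE a_lt_m c_lt_m /=.
apply/and4P; split; [exact: ac | by rewrite eq_sym | |].
- by apply/subsetPn; exists m; rewrite ?inE ?ltnn.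
- by apply/subsetPn; exists x; rewrite ?inE.
Qed.

Lemma card_prop23_family n : 1 < n -> #|prop23_family n| <= 'C(n, 2) + 2 * n - 1.
Proof.
move=> n_gt1.
pose sets_of_card k := [set A : {set 'I_n} | #|A| == k].
pose long_prefixes := [set prefix_set n k.+3 | k : 'I_(n - 2)].
have sub : prop23_family n \subset
    sets_of_card 0 :|: sets_of_card 1 :|: sets_of_card 2 :|: long_prefixes.
  apply/subsetP=> A; rewrite !inE => /orP[|/existsP[i /andP[i3 /eqP->]]].
    by rewrite leq_eqVlt ltnS leq_eqVlt ltnS leqn0 => /or3P[]->; rewrite ?orbT.
  apply/orP; right; apply/imsetP.
  have i_lt : i - 3 < n - 2 by move: (ltn_ord i) i3; lia.
  by exists (Ordinal i_lt) => //; rewrite /prefix_set /=; have -> : (i - 3).+3 = i by lia.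
apply: leq_trans (subset_leq_card sub) _.
apply: leq_trans (leq_card_setU _ _) _.
apply: leq_trans (leq_add (leq_card_setU _ _) (leq_imset_card _ _)) _.
apply: leq_trans (leq_add (leq_add (leq_card_setU _ _) (leqnn _)) (leqnn _)) _.
rewrite !card_draws card_ord card_ord bin0 bin1; lia.
Qed.

Lemma isat_le_card (P : finType) (le : rel P) n (F : {set {set 'I_n}}) :
  induced_saturated le F -> isat le n <= #|F|.
Proof. by move=> satF; rewrite /isat -minEnat -leEnat; apply: bigmin_le_cond. Qed.

Theorem proposition2p3 (n : nat) (hn : 3 <= n) :
  induced_saturated butterfly_le (prop23_family n) /\
  isat butterfly_le n <= 'C(n, 2) + 2 * n - 1.
Proof.
have satF : induced_saturated butterfly_le (prop23_family n).
  apply/andP; split; first exact: prop23_family_butterfly_free.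
  by apply/forallP=> F'; apply/implyP; apply: prop23_family_proper_has_butterfly.
split=> //; apply: leq_trans (isat_le_card satF) (card_prop23_family _).
exact: ltnW.
Qed.
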